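(* If a set $\Phi\subseteq\mathrm{FO}\cup{\sim}\mathrm{FO}$ is unsatisfiable in team semantics, then some finite subset of $\Phi$ is unsatisfiable.
   Context: Fix a countable vocabulary $\tau$ and a countably infinite set of variables. $\mathrm{FO}$: first-order $\tau$-formulas (built with $\neg,\to,\forall x$); ${\sim}\mathrm{FO}=\{{\sim}\alpha:\alpha\in\mathrm{FO}\}$. A valuation is $(\mathcal A,T)$ with $\mathcal A$ a $\tau$-structure with nonempty domain and $T$ a (possibly empty) set of assignments of domain elements to the variables. For $\alpha\in\mathrm{FO}$, $(\mathcal A,T)\models\alpha$ iff $(\mathcal A,s)\models\alpha$ classically for all $s\in T$; $(\mathcal A,T)\models{\sim}\alpha$ iff $(\mathcal A,T)\not\models\alpha$. A set is satisfiable if some valuation satisfies all its members. *)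

From Stdlib Require Import List Arith Fin.
Import ListNotations.
Set Implicit Arguments.

Record vocab := Vocab {
  fsym : Type;
  rsym : Type;
  far : fsym -> nat;
  rar : rsym -> nat
}.

Definition countable_vocab (tau : vocab) : Prop :=
  (exists c : fsym tau -> nat, forall f g, c f = c g -> f = g) /\
  (exists c : rsym tau -> nat, forall r q, c r = c q -> r = q).

Definition var := nat.

Inductive term (tau : vocab) : Type :=
| Tvar : var -> term tau
| Tfun : forall f : fsym tau, (Fin.t (@far tau f) -> term tau) -> term tau.

Inductive fo (tau : vocab) : Type :=
| FEq : term tau -> term tau -> fo tau
| FRel : forall r : rsym tau, (Fin.t (@rar tau r) -> term tau) -> fo tau
| FNot : fo tau -> fo tau
| FImp : fo tau -> fo tau -> fo tau
| FAll : var -> fo tau -> fo tau.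

Record structure (tau : vocab) := Structure {
  dom : Type;
  dom_inh : inhabited dom;
  fint : forall f : fsym tau, (Fin.t (@far tau f) -> dom) -> dom;
  rint : forall r : rsym tau, (Fin.t (@rar tau r) -> dom) -> Prop
}.

Definition assignment tau (A : structure tau) := var -> dom A.

Definition upd tau (A : structure tau) (s : assignment A) (x : var) (d : dom A)
  : assignment A := fun y => if Nat.eqb y x then d else s y.

Fixpoint teval tau (A : structure tau) (s : assignment A) (t : term tau) : dom A :=
  match t with
  | Tvar _ x => s x
  | Tfun f args => fint A f (fun i => teval s (args i))
  end.

Fixpoint sat tau (A : structure tau) (s : assignment A) (phi : fo tau) : Prop :=
  match phi with
  | FEq t1 t2 => teval s t1 = teval s t2
  | FRel r args => rint A r (fun i => teval s (args i))
  | FNot psi => ~ sat s psi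
  | FImp psi chi => sat s psi -> sat s chi
  | FAll x psi => forall d : dom A, sat (upd s x d) psi
  end.

Inductive sform (tau : vocab) : Type :=
| Pos : fo tau -> sform tau
| Neg : fo tau -> sform tau.         (* ~alpha (weak contradictory negation) *)

Definition team tau (A : structure tau) := assignment A -> Prop.

Definition tsat tau (A : structure tau) (T : team A) (phi : sform tau) : Prop :=
  match phi with
  | Pos a => forall s, T s -> sat s a
  | Neg a => ~ (forall s, T s -> sat s a)
  end.

Definition satisfiable tau (Phi : sform tau -> Prop) : Prop :=
  exists (A : structure tau) (T : team A), forall phi, Phi phi -> tsat T phi.

Definition list_satisfiable tau (l : list (sform tau)) : Prop :=
  exists (A : structure tau) (T : team A), forall phi, In phi l -> tsat T phi.

(* Suppose every finite subset of Phi has a model (A_l, T_l).  Take an ultrafilter U on the finite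
   subsets l of Phi containing, for every l, the set of those l' that include l, and form the
   ultraproduct of the A_l.  Łoś's theorem holds for it, and the team of all classes [s] of families
   of assignments with s_l in T_l for U-many l satisfies every alpha and every ~alpha that holds in
   U-many (A_l, T_l): for ~alpha, choose s_l in T_l falsifying alpha.  Every member of Phi holds in
   U-many (A_l, T_l), so this team satisfies Phi. *)

From Stdlib Require Import List ClassicalEpsilon.
From mathcomp Require Import ssreflect ssrfun ssrbool boolp classical_sets filter.

Local Open Scope classical_set_scope.

Lemma dependent_epsilon (I : Type) (B : I -> Type) (P : forall i, B i -> Prop) :
  (forall i, inhabited (B i)) ->
  exists f : forall i, B i, forall i, (exists b, P i b) -> P i (f i).
Proof. by move=> inhB; exists (fun i => epsilon (inhB i) (P i)) => i; apply: epsilon_spec. Qed.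

Lemma ultrafilter_from_directed (J T : Type) (B : J -> set T) :
  inhabited J ->
  (forall j k, exists m, B m `<=` B j `&` B k) ->
  (forall j, B j !=set0) ->
  exists U : set_system T, UltraFilter U /\ forall j, U (B j).
Proof.
case=> j0 dirB neB.
have filterB : Filter (filter_from setT B).
  apply: filter_from_filter; first by exists j0.
  by move=> j k _ _; have [m Bm] := dirB j k; exists m.
have [U [ultraU subU]] := ultraFilterLemma (filter_from_proper filterB (fun j _ => neB j)).
by exists U; split=> // j; apply: subU; exists j.
Qed.

Section FilterFacts.
Context {T : Type} {F : set_system T} {FF : Filter F}.

Lemma filter_iff_on (E X Y : set T) :
  F E -> (forall i, E i -> (X i <-> Y i)) -> (F X <-> F Y).
Proof. by move=> FE XY; split; apply: filterS2 FE => i /XY []. Qed.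

Lemma filter_forall_fin n (P : Fin.t n -> set T) :
  (forall k, F (P k)) -> F (fun i => forall k, P k i).
Proof.
elim: n P => [|n IH] P FP; first by apply: filterE => i k; inversion k.
apply: filterS2 (FP Fin.F1) (IH _ (fun k => FP (Fin.FS k))) => i P1 PS k.
exact: (Fin.caseS' k (fun k => P k i)).
Qed.

End FilterFacts.

Section UltraFacts.
Context {T : Type} {U : set_system T} {UU : UltraFilter U}.

Lemma ultra_setC (X : set T) : ~ U X <-> U (~` X).
Proof.
split; first by case: (in_ultra_setVsetC X UU).
by move=> UnX UX; apply: (filter_not_empty U); apply: filterS2 UX UnX => i.
Qed.

Lemma ultra_imply (X Y : set T) : (U X -> U Y) <-> U (fun i => X i -> Y i).
Proof.
split; last by move=> UXY UX; apply: filter_app UXY UX.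
move=> XY; case: (in_ultra_setVsetC X UU) => [/XY|]; apply: filterS => i //.
Qed.

End UltraFacts.

Section Ultraproduct.
Context {tau : vocab} {I : Type} (A : I -> structure tau) (U : set_system I) {UU : UltraFilter U}.

Definition product := forall i, dom (A i).

Definition ueq (f g : product) : Prop := U (fun i => f i = g i).

(* [FEq] is interpreted by equality in [dom], so the ultraproduct is a genuine quotient: its
   elements are the [ueq]-classes, represented as predicates. *)
Definition ultra_dom := {P : product -> Prop | exists f, P = ueq f}.

Definition ucls (f : product) : ultra_dom := exist _ (ueq f) (ex_intro _ f erefl).

Definition urep (x : ultra_dom) : product := sval (cid (svalP x)).

Lemma ueq_refl f : ueq f f.
Proof. exact: filterE. Qed.

Lemma ueq_sym {f g} : ueq f g -> ueq g f.
Proof. by apply: filterS => i. Qed.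

Lemma ueq_trans {f g h} : ueq f g -> ueq g h -> ueq f h.
Proof. by apply: filterS2 => i ->. Qed.

Lemma ucls_eq f g : ucls f = ucls g <-> ueq f g.
Proof.
split; first by move=> /(congr1 sval) /= ->; apply: ueq_refl.
move=> fg; apply: eq_sig_hprop => [? ? ?|/=]; first exact: Prop_irrelevance.
apply: funext => h; apply: propext.
by split; [apply: ueq_trans (ueq_sym fg) | apply: ueq_trans fg].
Qed.

Lemma ucls_urep x : ucls (urep x) = x.
Proof.
apply: eq_sig_hprop => [? ? ?|/=]; first exact: Prop_irrelevance.
by rewrite /urep; case: (cid (svalP x)).
Qed.

Lemma urep_ucls f : ueq (urep (ucls f)) f.
Proof. by apply/ucls_eq; rewrite ucls_urep. Qed.

Lemma ueq_tuple {n} {a : Fin.t n -> ultra_dom} {b : Fin.t n -> product} :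
  (forall k, ueq (urep (a k)) (b k)) -> U (fun i => (fun k => urep (a k) i) = (fun k => b k i)).
Proof. by move=> /filter_forall_fin; apply: filterS => i /funext. Qed.

Lemma ultra_dom_inhabited : inhabited ultra_dom.
Proof.
have [f _] := @dependent_epsilon I (fun i => dom (A i)) (fun _ _ => True)
  (fun i => dom_inh (A i)).
exact: inhabits (ucls f).
Qed.

Definition ultraproduct : structure tau :=
  @Structure tau ultra_dom ultra_dom_inhabited
    (fun f args => ucls (fun i => fint (A i) f (fun k => urep (args k) i)))
    (fun r args => U (fun i => rint (A i) r (fun k => urep (args k) i))).

Definition ulift (s : forall i, assignment (A i)) : assignment ultraproduct :=
  fun v => ucls (fun i => s i v).

Lemma teval_ulift s t : teval (ulift s) t = ucls (fun i => teval (s i) t).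
Proof.
elim: t => [//|f args IH] /=; apply/ucls_eq.
have urep_args k : ueq (urep (teval (ulift s) (args k))) (fun i => teval (s i) (args k)).
  by rewrite IH; apply: urep_ucls.
by apply: filterS (ueq_tuple urep_args) => i ->.
Qed.

Lemma urep_teval_ulift s t : ueq (urep (teval (ulift s) t)) (fun i => teval (s i) t).
Proof. by rewrite teval_ulift; apply: urep_ucls. Qed.

Lemma upd_ulift s x g : upd (ulift s) x (ucls g) = ulift (fun i => upd (s i) x (g i)).
Proof. by apply: funext => v; rewrite /upd /ulift; case: Nat.eqb. Qed.

Theorem sat_ulift phi s : sat (ulift s) phi <-> U (fun i => sat (s i) phi).
Proof.
elim: phi s => [t1 t2|r args|psi IH|psi IH1 chi IH2|x psi IH] s /=.
- by rewrite !teval_ulift; apply: ucls_eq.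
- apply: filter_iff_on (ueq_tuple (fun k => urep_teval_ulift s (args k))) _.
  by move=> i ->.
- by rewrite IH; apply: ultra_setC.
- by rewrite IH1 IH2; apply: ultra_imply.
- split=> [all_d|Uall d]; last first.
    by rewrite -(ucls_urep d) upd_ulift IH; apply: filterS Uall => i; apply.
  (* [g] picks a counterexample in every factor that has one. *)
  have [g gP] := @dependent_epsilon I (fun i => dom (A i))
    (fun i d => ~ sat (upd (s i) x d) psi) (fun i => dom_inh (A i)).
  have := all_d (ucls g); rewrite upd_ulift IH; apply: filterS => i sat_g d.
  by apply: contrapT => nsat; apply: gP sat_g; exists d.
Qed.

Variable T : forall i, team (A i).

Definition ultra_team : team ultraproduct :=
  fun a => exists s : forall i, assignment (A i), U (fun i => T i (s i)) /\ a = ulift s.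

Lemma tsat_ultra_team phi : U (fun i => tsat (T i) phi) -> tsat ultra_team phi.
Proof.
case: phi => [a|b] /= Ua.
  by move=> _ [s [Ts ->]]; apply/sat_ulift; apply: filterS2 Ts Ua => i Tsi; apply.
have [s sP] := @dependent_epsilon I (fun i => assignment (A i))
  (fun i s => T i s /\ ~ sat s b) (fun i => let: inhabits d := dom_inh (A i) in inhabits (fun=> d)).
have Us : U (fun i => T i (s i) /\ ~ sat (s i) b).
  by apply: filterS Ua => i /existsNP [s' /not_implyP s'P]; apply: sP; exists s'.
have [Ts nsat_b] : U (fun i => T i (s i)) /\ U (fun i => ~ sat (s i) b).
  by split; apply: filterS Us => i [].
move=> /(_ (ulift s) (ex_intro _ s (conj Ts erefl))).
move=> /sat_ulift sat_b.
by apply: (filter_not_empty U); apply: filterS2 nsat_b sat_b => i.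
Qed.

End Ultraproduct.

Lemma finitely_satisfiable_satisfiable (tau : vocab) (Phi : sform tau -> Prop) :
  (forall l, (forall phi, In phi l -> Phi phi) -> list_satisfiable l) -> satisfiable Phi.
Proof.
move=> fin_sat.
pose I := {l : list (sform tau) | forall phi, In phi l -> Phi phi}.
have [M MP] : {M : I -> {A : structure tau & team A} &
                forall i phi, In phi (sval i) -> tsat (projT2 (M i)) phi}.
  apply: (@choice _ _ (fun i (M : {A : structure tau & team A}) =>
                    forall phi, In phi (sval i) -> tsat (projT2 M) phi)) => -[l Pl].
  by have [A [T AT]] := fin_sat l Pl; exists (existT _ A T).
pose above (j : I) : set I := fun i => forall phi, In phi (sval j) -> In phi (sval i).
have [U [UU Uabove]] : exists U : set_system I, UltraFilter U /\ forall j, U (above j).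
  apply: ultrafilter_from_directed => [|[j Pj] [k Pk]|j]; last by exists j.
    by constructor; exists nil.
  have Pjk phi (jk_phi : In phi (j ++ k)) : Phi phi.
    by case: (in_app_or _ _ _ jk_phi) => [/(Pj phi)|/(Pk phi)].
  by exists (exist _ _ Pjk) => i jk_i; split=> phi ? /=; apply: jk_i; apply: in_or_app; auto.
exists (ultraproduct (fun i => projT1 (M i)) U), (ultra_team _ U (fun i => projT2 (M i))).
move=> phi Pphi; apply: tsat_ultra_team.
have phi_in : forall psi, In psi (phi :: nil) -> Phi psi by move=> psi [<-|[]].
by apply: filterS (Uabove (exist _ _ phi_in)) => i /(_ phi (or_introl erefl)); apply: MP.
Qed.

Theorem mainTheorem12 (tau : vocab) (Htau : countable_vocab tau)
  (Phi : sform tau -> Prop) :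
  ~ satisfiable Phi ->
  exists l : list (sform tau), (forall phi, In phi l -> Phi phi) /\ ~ list_satisfiable l.
Proof.
move=> unsat; apply: contrapT => all_fin_sat; apply: unsat.
apply: finitely_satisfiable_satisfiable => l Pl; apply: contrapT => l_unsat.
by apply: all_fin_sat; exists l.
Qed.
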